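(* Let $G=(V,E)$ be a finite simple undirected graph, $k\ge1$ an integer, $S\subseteq V$ a $k$-plex, and $C\subseteq V$ with $C\cap S=\emptyset$. Let $v\in C$, and list the neighbors of $v$ in $C$ as $N(v)\cap C=\{v_1,\dots,v_d\}$ so that $|\overline{N}_{v_1}(S)|\le |\overline{N}_{v_2}(S)|\le\cdots\le|\overline{N}_{v_d}(S)|$. For $0\le i\le d$ let $T^i=\{v_1,\dots,v_i\}$ and let $$r=\max\Big\{i\in\{0,\dots,d\} : \sum_{u\in T^i}|\overline{N}_u(S)|\le \mathrm{sup}(S)\Big\}.$$ Then every $k$-plex $S'$ with $S\cup\{v\}\subseteq S'\subseteq S\cup C$ satisfies $|S'|\le |S|+k-|\overline{N}_v(S)|+r$.
   Context: $N(x)$ denotes the set of neighbors of $x$ in $G$ ($x\notin N(x)$). For $x\in V$ and $T\subseteq V$, $\overline{N}_x(T)=T\setminus N(x)$ is the set of non-neighbors of $x$ in $T$; note that if $x\in T$ then $x\in\overline{N}_x(T)$. A set $T\subseteq V$ is a $k$-plex if every vertex $u\in T$ satisfies $|N(u)\cap T|\ge |T|-k$ (equivalently $|\overline{N}_u(T)|\le k$). For a $k$-plex $S$, $\mathrm{sup}(S)=\sum_{w\in S}\big(k-|\overline{N}_w(S)|\big)$. *)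

From mathcomp Require Import all_boot.
Set Implicit Arguments. Unset Strict Implicit. Unset Printing Implicit Defensive.

Definition simple_graph (T : finType) (e : rel T) : Prop :=
  symmetric e /\ irreflexive e.

Section KPlex.
Variables (T : finType) (e : rel T).

Definition nbhd (x : T) : {set T} := [set y | e x y].

Definition nonnbr (x : T) (A : {set T}) : {set T} := A :\: nbhd x.

(* k-plex: every u in A has at most k non-neighbours in A (counting itself) *)
Definition is_kplex (k : nat) (A : {set T}) : Prop :=
  forall u, u \in A -> #|nonnbr u A| <= k.

(* sup(S) = sum_{w in S} (k - |nonN_w(S)|); for a k-plex every summand is
   a genuine (non-truncated) natural-number difference. *)
Definition kplex_sup (k : nat) (S : {set T}) : nat :=
  \sum_(w in S) (k - #|nonnbr w S|).

Definition r_bound (k : nat) (S : {set T}) (s : seq T) : nat :=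
  \max_(i < (size s).+1 | \sum_(u <- take i s) #|nonnbr u S| <= kplex_sup k S) (i : nat).

End KPlex.

(* Split the part of S' outside S into the non-neighbours of v, which together
   with the non-neighbours of v in S number at most k, and the set B of
   neighbours of v.  Counting the non-adjacent pairs between S and B from both
   sides, each w in S has at most k - |N̄_w(S)| non-neighbours in B, so the
   total sum of |N̄_u(S)| over u in B is at most sup(S).  Since the list of
   neighbours of v is sorted by |N̄_u(S)|, its prefix of length |B| has an even
   smaller sum, whence |B| <= r. *)

From mathcomp Require Import all_boot.
From mathcomp Require Import zify.

Set Implicit Arguments.
Unset Strict Implicit.
Unset Printing Implicit Defensive.

Section SortedPrefix.
Variables (T : eqType) (f : T -> nat).
Let f_le := fun a b => f a <= f b.

Lemma sum_take_cons_le (x : T) (s : seq T) n :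
  path f_le x s -> n <= size s ->
  \sum_(u <- take n (x :: s)) f u <= \sum_(u <- take n s) f u.
Proof.
elim: s x n => [|y s IHs] x [|n] //=; rewrite ?big_nil // => /andP[fxy ps] n_le.
by rewrite !big_cons leq_add // IHs.
Qed.

(* The smallest elements come first, so any |t| of them weigh at least the
   first |t|. *)
Lemma sum_take_sorted_le_subseq (s t : seq T) :
  sorted f_le s -> subseq t s ->
  \sum_(u <- take (size t) s) f u <= \sum_(u <- t) f u.
Proof.
elim: s t => [|x s IHs] [|y t] //= sorted_s; rewrite ?big_nil //.
have sorted_s' := path_sorted sorted_s.
case: eqP => [-> | _] sub_ts; first by rewrite !big_cons leq_add2l IHs.
apply: leq_trans (IHs _ sorted_s' sub_ts).
by apply: sum_take_cons_le; rewrite // (size_subseq sub_ts).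
Qed.

End SortedPrefix.

Section KPlexBounds.
Variables (T : finType) (e : rel T).

Lemma card_nonnbr_setU x (A B : {set T}) : [disjoint A & B] ->
  #|nonnbr e x (A :|: B)| = #|nonnbr e x A| + #|nonnbr e x B|.
Proof.
move=> disAB; rewrite /nonnbr setDUl; apply/eqP.
by rewrite (leq_card_setU _ _).2 (disjointW (subsetDl _ _) (subsetDl _ _)).
Qed.

Lemma kplex_card_nonnbr_disjoint k (X A B : {set T}) x :
  is_kplex e k X -> x \in X -> [disjoint A & B] -> A :|: B \subset X ->
  #|nonnbr e x A| + #|nonnbr e x B| <= k.
Proof.
move=> kX xX disAB subABX; rewrite -card_nonnbr_setU //.
by apply: leq_trans (kX x xX); apply/subset_leq_card/setSD.
Qed.

Lemma card_nonnbr_sum x (A : {set T}) :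
  #|nonnbr e x A| = \sum_(y in A) ~~ e x y.
Proof.
rewrite -sum1_card big_mkcond [RHS]big_mkcond; apply: eq_bigr => y _.
by rewrite !inE; case: (y \in A); case: (e x y).
Qed.

Lemma sum_card_nonnbrC (A B : {set T}) : symmetric e ->
  \sum_(u in B) #|nonnbr e u A| = \sum_(w in A) #|nonnbr e w B|.
Proof.
move=> e_sym; under eq_bigr do rewrite card_nonnbr_sum.
under [RHS]eq_bigr do rewrite card_nonnbr_sum.
by rewrite exchange_big; apply: eq_bigr => w _; apply: eq_bigr => u _; rewrite e_sym.
Qed.

Lemma sum_card_nonnbr_le_kplex_sup k (S S' B : {set T}) : symmetric e ->
  is_kplex e k S' -> S \subset S' -> B \subset S' :\: S ->
  \sum_(u in B) #|nonnbr e u S| <= kplex_sup e k S.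
Proof.
move=> e_sym kS' subSS'; rewrite subsetD => /andP[subBS' disBS].
rewrite sum_card_nonnbrC // /kplex_sup; apply: leq_sum => w wS.
have : #|nonnbr e w S| + #|nonnbr e w B| <= k.
  apply: kplex_card_nonnbr_disjoint (subsetP subSS' w wS) _ _ => //.
    by rewrite disjoint_sym.
  by rewrite subUset subSS'.
lia.
Qed.

Lemma leq_r_bound k (S B : {set T}) (s : seq T) :
  sorted (fun a b => #|nonnbr e a S| <= #|nonnbr e b S|) s -> uniq s ->
  {subset B <= s} -> \sum_(u in B) #|nonnbr e u S| <= kplex_sup e k S ->
  #|B| <= r_bound e k S s.
Proof.
move=> sorted_s uniq_s subBs sumB_le.
pose t := filter (mem B) s.
have perm_tB : perm_eq t (enum B).
  apply: uniq_perm; [exact: filter_uniq | exact: enum_uniq | move=> x].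
  by rewrite mem_filter mem_enum andb_idr //; apply: subBs.
have size_t : size t = #|B| by rewrite (perm_size perm_tB) cardE.
have lt_B : #|B| < (size s).+1.
  by rewrite ltnS -size_t size_filter count_size.
apply: (@leq_bigmax_cond _ _ (fun i : 'I_(size s).+1 => (i : nat)) (Ordinal lt_B)).
rewrite /= -size_t.
apply: leq_trans (sum_take_sorted_le_subseq sorted_s (filter_subseq (mem B) s)) _.
by rewrite (perm_big _ perm_tB) big_enum.
Qed.

End KPlexBounds.

Theorem lemma5 (T : finType) (e : rel T) (k : nat) (S C : {set T}) (v : T)
  (s : seq T) :
  simple_graph e -> 1 <= k ->
  is_kplex e k S ->
  [disjoint C & S] ->
  v \in C ->
  perm_eq s (enum (nbhd e v :&: C)) ->
  sorted (fun a b => #|nonnbr e a S| <= #|nonnbr e b S|) s ->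
  forall S' : {set T},
    is_kplex e k S' ->
    v |: S \subset S' -> S' \subset S :|: C ->
    #|S'| <= #|S| + k - #|nonnbr e v S| + r_bound e k S s.
Proof.
move=> [e_sym _] _ _ _ _ perm_s sorted_s S' kS' subvSS' subS'SC.
have [vS' subSS'] : v \in S' /\ S \subset S' by move: subvSS'; rewrite subUset sub1set => /andP.
set A := S' :\: S; set B := A :&: nbhd e v.
have card_S' : #|S'| = #|S| + #|nonnbr e v A| + #|B|.
  rewrite -(cardsID S S') (setIidPr subSS') -/A -(cardsID (nbhd e v) A) -/B.
  by rewrite /nonnbr; lia.
have nonnbr_v : #|nonnbr e v S| + #|nonnbr e v A| <= k.
  apply: kplex_card_nonnbr_disjoint kS' vS' _ _.
    by rewrite disjoint_sym disjoints_subset /A setDE subsetIr.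
  by rewrite subUset subSS' subsetDl.
have sub_B_s : {subset B <= s}.
  move=> x; rewrite (perm_mem perm_s) mem_enum !inE => /andP[/andP[xS xS'] ->] /=.
  by move: (subsetP subS'SC x xS'); rewrite inE (negbTE xS).
have B_le_r : #|B| <= r_bound e k S s.
  apply: leq_r_bound sorted_s _ sub_B_s _; first by rewrite (perm_uniq perm_s) enum_uniq.
  exact: (sum_card_nonnbr_le_kplex_sup e_sym kS' subSS' (subsetIl _ _)).
rewrite card_S'; lia.
Qed.
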